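(* If $\rho\equiv\sum_{n=1}^N \frac{r_n}{C_n}\le 1$, then for all $t\ge 0$, $$B(t)\le \min\left\{\Big(\sum_n r_n\Big)\sum_n\frac{\sigma_n}{C_n}+\sum_n\sigma_n,\;\; C_{max}\sum_n\frac{\sigma_n}{C_n}+\rho\, C_{max}\max_n\frac{L_n}{C_n}\right\}.$$
   Context: A multiclass FIFO system serves packets from $N$ classes. Class $n$ has constant service rate $C_n>0$; $C_{max}=\max_n C_n$. All packets, indexed in order of arrival (ties broken arbitrarily) as $p^{g,1},p^{g,2},\dots$ with arrival times $0\le a^{g,1}\le\cdots$ and lengths $l^{g,j}>0$, depart at $d^{g,j}=\max\{a^{g,j},d^{g,j-1}\}+l^{g,j}/C_{c(j)}$, $d^{g,0}=0$, $c(j)$ the class of $p^{g,j}$. $L_n$ is the maximum packet length of class $n$. $A_n(s,t)$ is the total length of class-$n$ packets arriving in $[s,t]$; each class satisfies $A_n(s,t)\le r_n(t-s)+\sigma_n$ for all $0\le s\le t$, with $r_n,\sigma_n\ge0$. $A(t)$ is the total length of all packets arrived in $[0,t]$, $A^*(t)$ the total length of packets with departure time $\le t$, and the backlog is $B(t)=A(t)-A^*(t)$. *)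

From Stdlib Require Import Reals Lra.
Open Scope R_scope.

Fixpoint sumR (n : nat) (f : nat -> R) : R :=
  match n with
  | O => 0
  | S k => sumR k f + f k
  end.

Fixpoint maxR (n : nat) (f : nat -> R) : R :=
  match n with
  | O => 0
  | S O => f O
  | S k => Rmax (maxR k f) (f k)
  end.

Definition ind (P : Prop) (dec : {P} + {~ P}) (x : R) : R :=
  if dec then x else 0.

(* Packets are indexed 1..K; a j = arrival time, l j = length, c j = class.
   Departure time: d 0 = 0, d j = max(a j, d (j-1)) + l j / C (c j). *)
Fixpoint dep (a l : nat -> R) (c : nat -> nat) (C : nat -> R) (j : nat) : R :=
  match j with
  | O => 0
  | S k => Rmax (a (S k)) (dep a l c C k) + l (S k) / C (c (S k))
  end.

Definition A_cls (K : nat) (a l : nat -> R) (c : nat -> nat) (n : nat) (s t : R) : R :=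
  sumR K (fun j =>
    if Nat.eq_dec (c (S j)) n then
      if Rle_dec s (a (S j)) then
        if Rle_dec (a (S j)) t then l (S j) else 0
      else 0
    else 0).

Definition A_tot (K : nat) (a l : nat -> R) (t : R) : R :=
  sumR K (fun j => if Rle_dec (a (S j)) t then l (S j) else 0).

Definition A_dep (K : nat) (a l : nat -> R) (c : nat -> nat) (C : nat -> R) (t : R) : R :=
  sumR K (fun j => if Rle_dec (dep a l c C (S j)) t then l (S j) else 0).

Definition backlog (K : nat) (a l : nat -> R) (c : nat -> nat) (C : nat -> R) (t : R) : R :=
  A_tot K a l t - A_dep K a l c C t.

(* Within a busy period the FIFO server works continuously, so the departure time of packet j
   is a_i + W(i,j) for the first packet i of its busy period, where W(i,j) is the total service
   time of packets i..j.  Grouping W(i,j) by class and applying the arrival curves gives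
   W(i,j) <= rho (t - a_i) + sum_n sigma_n / C_n whenever a_j <= t.  Hence every packet waits
   at most sum_n sigma_n / C_n, so the packets backlogged at t all arrived in a window of that
   length, which gives the first bound.  For the second, the backlogged packets form a block
   p..m; if i starts the busy period of p, then t < d_p = a_i + W(i,p), and the bound on
   W(i,m) leaves W(p,m) <= sum_n sigma_n / C_n + rho l_p / C_p, while the backlog is at most
   C_max W(p,m). *)
From Stdlib Require Import Reals Lra Lia Classical Wf_nat.
Open Scope R_scope.

Lemma sumR_ext n f g : (forall q, (q < n)%nat -> f q = g q) -> sumR n f = sumR n g.
Proof.
  induction n as [|n IH]; intros Hfg; simpl; [reflexivity|].
  rewrite IH by (intros; apply Hfg; lia).
  now rewrite Hfg by lia.
Qed.

Lemma sumR_le n f g : (forall q, (q < n)%nat -> f q <= g q) -> sumR n f <= sumR n g.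
Proof.
  induction n as [|n IH]; intros Hfg; simpl; [lra|].
  assert (sumR n f <= sumR n g) by (apply IH; intros; apply Hfg; lia).
  specialize (Hfg n ltac:(lia)); lra.
Qed.

Lemma sumR_0 n : sumR n (fun _ => 0) = 0.
Proof. induction n as [|n IH]; simpl; [|rewrite IH]; lra. Qed.

Lemma sumR_nonneg n f : (forall q, (q < n)%nat -> 0 <= f q) -> 0 <= sumR n f.
Proof. intros Hf. rewrite <- (sumR_0 n). now apply sumR_le. Qed.

Lemma sumR_add n f g : sumR n (fun q => f q + g q) = sumR n f + sumR n g.
Proof. induction n as [|n IH]; simpl; [|rewrite IH]; ring. Qed.

Lemma sumR_sub n f g : sumR n (fun q => f q - g q) = sumR n f - sumR n g.
Proof. induction n as [|n IH]; simpl; [|rewrite IH]; ring. Qed.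

Lemma sumR_scal_l n x f : sumR n (fun q => x * f q) = x * sumR n f.
Proof. induction n as [|n IH]; simpl; [|rewrite IH]; ring. Qed.

Lemma sumR_delta n k y : (k < n)%nat ->
  sumR n (fun m => if Nat.eq_dec k m then y m else 0) = y k.
Proof.
  induction n as [|n IH]; intros Hk; simpl; [lia|].
  destruct (Nat.eq_dec k n) as [->|Hkn].
  - rewrite (sumR_ext n _ (fun _ => 0)), sumR_0; [lra|].
    intros q Hq; destruct (Nat.eq_dec n q); [lia|reflexivity].
  - rewrite IH by lia; lra.
Qed.

Lemma sumR_by_class N K (c : nat -> nat) (h g : nat -> R) :
  (forall j, (j < K)%nat -> (c (S j) < N)%nat) ->
  sumR K (fun j => h (c (S j)) * g j) =
  sumR N (fun n => h n * sumR K (fun j => if Nat.eq_dec (c (S j)) n then g j else 0)).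
Proof.
  induction K as [|K IH]; intros Hc; simpl.
  - rewrite (sumR_ext N _ (fun _ => 0)), sumR_0 by (intros; ring); reflexivity.
  - rewrite IH by (intros; apply Hc; lia).
    rewrite <- (sumR_delta N (c (S K)) (fun n => h n * g K)), <- sumR_add by (apply Hc; lia).
    apply sumR_ext; intros n _; destruct (Nat.eq_dec (c (S K)) n); ring.
Qed.

Lemma sumR_prefix K m g : (m <= K)%nat ->
  sumR K (fun q => if (S q <=? m)%nat then g q else 0) = sumR m g.
Proof.
  induction K as [|K IH]; intros Hm.
  - now replace m with 0%nat by lia.
  - destruct (Nat.eq_dec m (S K)) as [->|Hne].
    + apply sumR_ext; intros q Hq.
      now replace (S q <=? S K)%nat with true by (symmetry; apply Nat.leb_le; lia).
    + cbn [sumR]; rewrite IH by lia.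
      replace (S K <=? m)%nat with false by (symmetry; apply Nat.leb_gt; lia); lra.
Qed.

Lemma maxR_ge N f n : (n < N)%nat -> f n <= maxR N f.
Proof.
  induction N as [|N IH]; intros Hn; [lia|].
  destruct N as [|N]; [now replace n with 0%nat by lia|].
  change (maxR (S (S N)) f) with (Rmax (maxR (S N) f) (f (S N))).
  destruct (Nat.eq_dec n (S N)) as [->|Hne]; [apply Rmax_r|].
  eapply Rle_trans; [apply IH; lia|apply Rmax_l].
Qed.

Lemma exists_least (P : nat -> Prop) :
  (exists n, P n) -> exists n, P n /\ forall k, (k < n)%nat -> ~ P k.
Proof.
  intros HP.
  destruct (dec_inh_nat_subset_has_unique_least_element P (fun n => classic (P n)) HP)
    as [n [[Pn Hleast] _]].
  exists n; split; [exact Pn|].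
  intros k Hk Pk; specialize (Hleast k Pk); lia.
Qed.

Lemma exists_greatest (P : nat -> Prop) K :
  (exists n, P n) -> (forall n, P n -> (n <= K)%nat) ->
  exists n, P n /\ forall k, P k -> (k <= n)%nat.
Proof.
  intros [n Pn] HK.
  destruct (exists_least (fun u => forall k, P k -> (k <= u)%nat)) as [u [Hub Hleast]];
    [now exists K|].
  exists u; split; [|exact Hub].
  apply NNPP; intros nPu.
  (* otherwise u - 1 would be a smaller upper bound *)
  assert (Hn : (n < u)%nat).
  { specialize (Hub n Pn); destruct (Nat.eq_dec n u) as [->|]; [contradiction|lia]. }
  apply (Hleast (u - 1)%nat); [lia|].
  intros k Pk; specialize (Hub k Pk); destruct (Nat.eq_dec k u) as [->|]; [contradiction|lia].
Qed.

Section Fifo.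

Variables (N K : nat) (C r sigma L a l : nat -> R) (c : nat -> nat).

Local Notation d := (dep a l c C).
Local Notation svc j := (l j / C (c j)).
Local Notation rho := (sumR N (fun n => r n / C n)).
Local Notation sigma_C := (sumR N (fun n => sigma n / C n)).

(* Service time of the packets i..j (packets are numbered from 1). *)
Definition work (i j : nat) : R :=
  sumR j (fun q => if (i <=? S q)%nat then svc (S q) else 0).

Definition arrived (s t : R) (j : nat) : R :=
  if Rle_dec s (a j) then if Rle_dec (a j) t then l j else 0 else 0.

Hypothesis HN : (1 <= N)%nat.
Hypothesis HC : forall n, (n < N)%nat -> 0 < C n.
Hypothesis Hr : forall n, (n < N)%nat -> 0 <= r n.
Hypothesis Hsigma : forall n, (n < N)%nat -> 0 <= sigma n.
Hypothesis HL0 : forall n, (n < N)%nat -> 0 <= L n.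
Hypothesis Ha0 : forall j, (1 <= j <= K)%nat -> 0 <= a j.
Hypothesis Hmono : forall j, (1 <= j < K)%nat -> a j <= a (S j).
Hypothesis Hl : forall j, (1 <= j <= K)%nat -> 0 < l j.
Hypothesis Hc : forall j, (1 <= j <= K)%nat -> (c j < N)%nat.
Hypothesis HL : forall j, (1 <= j <= K)%nat -> l j <= L (c j).
Hypothesis Hcurve : forall n s t, (n < N)%nat -> 0 <= s -> s <= t ->
  A_cls K a l c n s t <= r n * (t - s) + sigma n.
Hypothesis Hrho : rho <= 1.

Lemma div_C_nonneg x n : (n < N)%nat -> 0 <= x -> 0 <= x / C n.
Proof.
  intros Hn Hx; unfold Rdiv.
  apply Rmult_le_pos; [exact Hx|left; apply Rinv_0_lt_compat, HC, Hn].
Qed.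

Lemma rho_nonneg : 0 <= rho.
Proof. apply sumR_nonneg; intros; apply div_C_nonneg; auto. Qed.

Lemma sigma_C_nonneg : 0 <= sigma_C.
Proof. apply sumR_nonneg; intros; apply div_C_nonneg; auto. Qed.

Lemma svc_nonneg j : (1 <= j <= K)%nat -> 0 <= svc j.
Proof. intros Hj; apply div_C_nonneg; [apply Hc, Hj|left; apply Hl, Hj]. Qed.

Lemma arrival_mono i j : (1 <= i <= j)%nat -> (j <= K)%nat -> a i <= a j.
Proof.
  induction j as [|j IH]; intros Hij HjK; [lia|].
  destruct (Nat.eq_dec i (S j)) as [->|Hne]; [lra|].
  specialize (IH ltac:(lia) ltac:(lia)); specialize (Hmono j ltac:(lia)); lra.
Qed.

Lemma work_S i j : work i (S j) = work i j + (if (i <=? S j)%nat then svc (S j) else 0).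
Proof. reflexivity. Qed.

Lemma work_before i j : (j < i)%nat -> work i j = 0.
Proof.
  induction j as [|j IH]; intros Hj; [reflexivity|].
  rewrite work_S, IH by lia.
  replace (i <=? S j)%nat with false by (symmetry; apply Nat.leb_gt; lia); lra.
Qed.

Lemma work_nonneg i j : (j <= K)%nat -> 0 <= work i j.
Proof.
  intros Hj; apply sumR_nonneg; intros q Hq.
  destruct (i <=? S q)%nat; [apply svc_nonneg; lia|lra].
Qed.

Lemma work_split i j m : (i <= S j)%nat -> (j <= m)%nat ->
  work i m = work i j + work (S j) m.
Proof.
  induction m as [|m IH]; intros Hi Hjm.
  - replace j with 0%nat by lia; unfold work; simpl; lra.
  - destruct (Nat.eq_dec j (S m)) as [->|Hne].
    + rewrite (work_before (S (S m)) (S m)) by lia; lra.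
    + rewrite !work_S, IH by lia.
      replace (i <=? S m)%nat with true by (symmetry; apply Nat.leb_le; lia).
      replace (S j <=? S m)%nat with true by (symmetry; apply Nat.leb_le; lia); lra.
Qed.

Lemma dep_busy_period j : (1 <= j <= K)%nat ->
  exists i, (1 <= i <= j)%nat /\ d j = a i + work i j.
Proof.
  induction j as [|j IH]; intros Hj; [lia|].
  change (d (S j)) with (Rmax (a (S j)) (d j) + svc (S j)).
  destruct (Rle_dec (d j) (a (S j))) as [Hidle|Hbusy].
  - exists (S j); split; [lia|].
    rewrite Rmax_left, work_S, work_before, Nat.leb_refl by (lia || lra); lra.
  - destruct j as [|j]; [simpl in Hbusy; specialize (Ha0 1%nat ltac:(lia)); lra|].
    destruct IH as [i [Hi Hdj]]; [lia|].
    exists i; split; [lia|].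
    rewrite Rmax_right, Hdj, (work_S i (S j)) by lra.
    replace (i <=? S (S j))%nat with true by (symmetry; apply Nat.leb_le; lia); lra.
Qed.

Lemma arrived_weighted_le h s t : (forall n, (n < N)%nat -> 0 <= h n) -> 0 <= s -> s <= t ->
  sumR K (fun q => h (c (S q)) * arrived s t (S q)) <=
  sumR N (fun n => h n * (r n * (t - s) + sigma n)).
Proof.
  intros Hh Hs Hst.
  rewrite (sumR_by_class N K c h) by (intros; apply Hc; lia).
  apply sumR_le; intros n Hn.
  apply Rmult_le_compat_l; [now apply Hh|now apply Hcurve].
Qed.

Lemma work_le_arrival_curve i j t : (1 <= i <= j)%nat -> (j <= K)%nat -> a j <= t ->
  work i j <= (t - a i) * rho + sigma_C.
Proof.
  intros Hij HjK Ht.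
  assert (Hai : 0 <= a i) by (apply Ha0; lia).
  assert (Haij := arrival_mono i j Hij HjK).
  unfold work; rewrite <- (sumR_prefix K j) by lia.
  eapply Rle_trans.
  - apply (sumR_le K _ (fun q => (fun n => / C n) (c (S q)) * arrived (a i) t (S q))).
    intros q Hq; cbv beta; unfold arrived.
    assert (Hinv : 0 < / C (c (S q))) by (apply Rinv_0_lt_compat, HC, Hc; lia).
    assert (0 < l (S q)) by (apply Hl; lia).
    destruct (S q <=? j)%nat eqn:Hqj; [apply Nat.leb_le in Hqj|].
    2: destruct (Rle_dec (a i) (a (S q))); [destruct (Rle_dec (a (S q)) t)|]; nra.
    destruct (i <=? S q)%nat eqn:Hiq; [apply Nat.leb_le in Hiq|].
    2: destruct (Rle_dec (a i) (a (S q))); [destruct (Rle_dec (a (S q)) t)|]; nra.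
    assert (a i <= a (S q)) by (apply arrival_mono; lia).
    assert (a (S q) <= a j) by (apply arrival_mono; lia).
    destruct (Rle_dec (a i) (a (S q))); [|lra].
    destruct (Rle_dec (a (S q)) t); [|lra].
    unfold Rdiv; rewrite Rmult_comm; lra.
  - eapply Rle_trans.
    + apply (arrived_weighted_le (fun n => / C n)); [|lra|lra].
      intros n Hn; left; apply Rinv_0_lt_compat, HC, Hn.
    + rewrite <- sumR_scal_l, <- sumR_add; right.
      apply sumR_ext; intros; unfold Rdiv; ring.
Qed.

Lemma dep_le_delay j : (1 <= j <= K)%nat -> d j <= a j + sigma_C.
Proof.
  intros Hj; destruct (dep_busy_period j Hj) as [i [Hi ->]].
  pose proof (work_le_arrival_curve i j (a j) Hi ltac:(lia) (Rle_refl _)).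
  pose proof (arrival_mono i j Hi ltac:(lia)).
  pose proof rho_nonneg.
  assert ((a j - a i) * rho <= a j - a i) by nra; lra.
Qed.

Lemma work_backlogged_le p m t : (1 <= p <= m)%nat -> (m <= K)%nat -> a m <= t -> t < d p ->
  work p m <= sigma_C + rho * svc p.
Proof.
  intros Hpm HmK Ham Hdp.
  destruct (dep_busy_period p ltac:(lia)) as [i [Hip Hdp_eq]].
  destruct p as [|p]; [lia|].
  assert (Hsplit := work_split i p m ltac:(lia) ltac:(lia)).
  assert (Hlast : work i (S p) = work i p + svc (S p)).
  { rewrite work_S; replace (i <=? S p)%nat with true by (symmetry; apply Nat.leb_le; lia).
    reflexivity. }
  assert (Hcurve_im := work_le_arrival_curve i m t ltac:(lia) HmK Ham).
  assert (Hw : 0 <= work i p) by (apply work_nonneg; lia).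
  pose proof rho_nonneg.
  assert (rho * (t - a i) <= rho * (work i p + svc (S p))) by (apply Rmult_le_compat_l; lra).
  assert (0 <= (1 - rho) * work i p) by (apply Rmult_le_pos; lra).
  nra.
Qed.

Lemma backlog_le_sum t g : (forall q, (q < K)%nat -> 0 <= g q) ->
  (forall q, (q < K)%nat -> a (S q) <= t -> t < d (S q) -> l (S q) <= g q) ->
  backlog K a l c C t <= sumR K g.
Proof.
  intros Hg0 Hg; unfold backlog, A_tot, A_dep.
  rewrite <- sumR_sub; apply sumR_le; intros q Hq.
  specialize (Hg0 q Hq); specialize (Hg q Hq); pose proof (Hl (S q) ltac:(lia)).
  destruct (Rle_dec (a (S q)) t) as [Hat|Hat]; destruct (Rle_dec (d (S q)) t) as [Hdt|Hdt];
    [lra|specialize (Hg Hat ltac:(lra)); lra|lra|lra].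
Qed.

Lemma backlog_le_burst t : 0 <= t ->
  backlog K a l c C t <= sumR N r * sigma_C + sumR N sigma.
Proof.
  intros Ht.
  set (s := Rmax 0 (t - sigma_C)).
  assert (Hs0 : 0 <= s) by apply Rmax_l.
  assert (Hs : t - sigma_C <= s) by apply Rmax_r.
  assert (Hst : s <= t) by (apply Rmax_lub; pose proof sigma_C_nonneg; lra).
  apply Rle_trans with (sumR K (fun q => (fun _ => 1) (c (S q)) * arrived s t (S q))).
  - apply backlog_le_sum; intros q Hq; cbv beta; rewrite Rmult_1_l; unfold arrived;
      pose proof (Hl (S q) ltac:(lia)).
    + destruct (Rle_dec s (a (S q))); [destruct (Rle_dec (a (S q)) t)|]; lra.
    + intros Hat Hdt.
      pose proof (dep_le_delay (S q) ltac:(lia)).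
      assert (s <= a (S q)) by (apply Rmax_lub; [apply Ha0; lia|lra]).
      destruct (Rle_dec s (a (S q))); [|lra].
      destruct (Rle_dec (a (S q)) t); lra.
  - eapply Rle_trans; [apply (arrived_weighted_le (fun _ => 1)); auto; intros; lra|].
    rewrite (sumR_ext N _ (fun n => r n * (t - s) + sigma n)) by (intros; ring).
    rewrite sumR_add, (sumR_ext N (fun n => r n * (t - s)) (fun n => (t - s) * r n)),
      sumR_scal_l by (intros; ring).
    assert (0 <= sumR N r) by (apply sumR_nonneg; auto).
    assert ((t - s) * sumR N r <= sigma_C * sumR N r) by (apply Rmult_le_compat_r; lra).
    lra.
Qed.

Lemma maxR_C_pos : 0 < maxR N C.
Proof. pose proof (maxR_ge N C 0 ltac:(lia)); pose proof (HC 0%nat ltac:(lia)); lra. Qed.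

Lemma backlog_le_work_block t p m : (1 <= p)%nat -> (m <= K)%nat ->
  (forall j, (1 <= j <= K)%nat -> a j <= t -> t < d j -> (p <= j <= m)%nat) ->
  backlog K a l c C t <= maxR N C * work p m.
Proof.
  intros Hp HmK Hblock.
  pose proof maxR_C_pos.
  unfold work; rewrite <- sumR_scal_l, <- (sumR_prefix K m) by lia.
  apply backlog_le_sum; intros q Hq.
  - destruct (S q <=? m)%nat; [|lra].
    destruct (p <=? S q)%nat; [|lra].
    apply Rmult_le_pos; [lra|apply svc_nonneg; lia].
  - intros Hat Hdt.
    destruct (Hblock (S q) ltac:(lia) Hat Hdt) as [Hpq Hqm].
    replace (S q <=? m)%nat with true by (symmetry; apply Nat.leb_le; lia).
    replace (p <=? S q)%nat with true by (symmetry; apply Nat.leb_le; lia).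
    assert (HCq : 0 < C (c (S q))) by (apply HC, Hc; lia).
    assert (C (c (S q)) <= maxR N C) by (apply maxR_ge, Hc; lia).
    assert (0 <= svc (S q)) by (apply svc_nonneg; lia).
    apply Rle_trans with (C (c (S q)) * svc (S q)); [right; field; lra|].
    apply Rmult_le_compat_r; lra.
Qed.

Lemma backlog_le_max_packet t :
  backlog K a l c C t <=
  maxR N C * sigma_C + rho * maxR N C * maxR N (fun n => L n / C n).
Proof.
  set (LC := maxR N (fun n => L n / C n)).
  assert (HLC : 0 <= LC)
    by (eapply Rle_trans; [apply (div_C_nonneg (L 0%nat) 0%nat); auto; lia
                          |apply (maxR_ge N (fun n => L n / C n)); lia]).
  pose proof maxR_C_pos; pose proof rho_nonneg; pose proof sigma_C_nonneg.
  set (backlogged := fun j => (1 <= j <= K)%nat /\ a j <= t /\ t < d j).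
  destruct (classic (exists j, backlogged j)) as [Hex|Hnone].
  2:{ eapply Rle_trans; [apply (backlog_le_sum t (fun _ => 0)); intros q Hq; [lra|]|].
      - intros Hat Hdt; exfalso; apply Hnone; exists (S q); repeat split; lia || lra.
      - rewrite sumR_0.
        assert (0 <= maxR N C * sigma_C) by (apply Rmult_le_pos; lra).
        assert (0 <= rho * maxR N C * LC) by (repeat apply Rmult_le_pos; lra); lra. }
  destruct (exists_least backlogged Hex) as [p [[Hp [Hap Hdp]] Hfirst]].
  destruct (exists_greatest backlogged K Hex) as [m [[Hm [Ham Hdm]] Hlast]];
    [intros j [Hj _]; lia|].
  assert (Hblock : forall j, (1 <= j <= K)%nat -> a j <= t -> t < d j -> (p <= j <= m)%nat).
  { intros j Hj Hat Hdt.
    assert (Hj_back : backlogged j) by (repeat split; lia || lra).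
    split; [|now apply Hlast].
    destruct (Nat.le_gt_cases p j); [assumption|exfalso; now apply (Hfirst j)]. }
  assert (Hpm : (p <= m)%nat) by (apply (Hblock p); lia || lra).
  eapply Rle_trans; [apply (backlog_le_work_block t p m); lia || assumption|].
  assert (Hwork := work_backlogged_le p m t ltac:(lia) ltac:(lia) Ham Hdp).
  assert (Hsvc : svc p <= LC).
  { apply Rle_trans with (L (c p) / C (c p)).
    - unfold Rdiv; apply Rmult_le_compat_r; [left; apply Rinv_0_lt_compat, HC, Hc; lia|apply HL; lia].
    - apply (maxR_ge N (fun n => L n / C n)), Hc; lia. }
  assert (rho * svc p <= rho * LC) by (apply Rmult_le_compat_l; lra).
  assert (maxR N C * work p m <= maxR N C * (sigma_C + rho * LC)) by (apply Rmult_le_compat_l; lra).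
  lra.
Qed.

End Fifo.

Theorem theorem2
  (N : nat) (C r sigma L : nat -> R)
  (K : nat) (a l : nat -> R) (c : nat -> nat)
  (HN : (1 <= N)%nat)
  (HC : forall n, (n < N)%nat -> 0 < C n)
  (Hr : forall n, (n < N)%nat -> 0 <= r n)
  (Hsigma : forall n, (n < N)%nat -> 0 <= sigma n)
  (HL0 : forall n, (n < N)%nat -> 0 <= L n)
  (Ha0 : forall j, (1 <= j <= K)%nat -> 0 <= a j)
  (Hmono : forall j, (1 <= j < K)%nat -> a j <= a (S j))
  (Hl : forall j, (1 <= j <= K)%nat -> 0 < l j)
  (Hc : forall j, (1 <= j <= K)%nat -> (c j < N)%nat)
  (HL : forall j, (1 <= j <= K)%nat -> l j <= L (c j))
  (Hcurve : forall n s t, (n < N)%nat -> 0 <= s -> s <= t ->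
             A_cls K a l c n s t <= r n * (t - s) + sigma n)
  (Hrho : sumR N (fun n => r n / C n) <= 1) :
  forall t, 0 <= t ->
    backlog K a l c C t <=
    Rmin (sumR N r * sumR N (fun n => sigma n / C n) + sumR N sigma)
         (maxR N C * sumR N (fun n => sigma n / C n)
          + sumR N (fun n => r n / C n) * maxR N C * maxR N (fun n => L n / C n)).
Proof.
  intros t Ht; apply Rmin_glb.
  - eapply backlog_le_burst; eauto.
  - eapply backlog_le_max_packet; eauto.
Qed.
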